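(* Let $k\geq1$ and $d_1,\dots,d_k\geq2$ be integers, let $T=W_{d_1}\otimes\cdots\otimes W_{d_k}$, and let $\mathscr{V}_{d_1,\dots,d_k}=\nu_{d_1,\dots,d_k}((\mathbb{P}^1)^k)$ be the Segre–Veronese variety. Let $\Gamma$ be any irreducible component of $\mathcal{S}(T,\mathscr{V}_{d_1,\dots,d_k})$. Then $\dim\Gamma\geq k$, and for every $p=(p_1,\dots,p_k)\in(\mathbb{P}^1)^k$ with $p_i\neq[x_i],[y_i]$ for all $i$, there exists $A\in\Gamma$ with $\nu_{d_1,\dots,d_k}(p)\in A$.
   Context: On the $i$-th factor use a basis $\{x_i,y_i\}$ of $\mathbb{C}^2$ and identify $S^d\mathbb{C}^2$ with binary forms; $W_{d_i}=x_i^{d_i-1}y_i$. $\nu_{d_1,\dots,d_k}:(\mathbb{P}^1)^k\to\mathbb{P}(S^{d_1}\mathbb{C}^2\otimes\cdots\otimes S^{d_k}\mathbb{C}^2)$ sends $([v_1],\dots,[v_k])\mapsto[v_1^{d_1}\otimes\cdots\otimes v_k^{d_k}]$. For a nondegenerate variety $X$ and a point $q$, $R_X(q)$ is the minimal $r$ such that $q$ lies in the span of $r$ points of $X$, and $\mathcal{S}(q,X)=\{(x_1,\dots,x_r)\in X^{(r)}: q\in\langle x_1,\dots,x_r\rangle\}$ with $r=R_X(q)$, where $X^{(r)}=X^r/\mathfrak{S}_r$ is the symmetric power; this is a constructible set whose elements are regarded as sets of $r$ points of $X$. *)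

From HB Require Import structures.
From mathcomp Require Import all_boot all_fingroup all_algebra finmap.
From mathcomp Require Import mpoly.
From mathcomp Require Import complex.
From mathcomp Require Import reals.

Set Implicit Arguments.
Unset Strict Implicit.
Unset Printing Implicit Defensive.

Import GRing.Theory.
Local Open Scope ring_scope.
Local Open Scope fset_scope.

Section SegreVeronese.
Variable C : fieldType.

(* A point of P^1 = P(C^2), C^2 with basis {x,y}: the class of a*x + b*y.
   Canonical representative: [a x + b y] with a <> 0 is encoded as Some (b/a)
   (representative (1, b/a)); the point [y] is encoded as None.  Thus
   [x] = Some 0 and [y] = None. *)
Definition rep1 (o : option C) : C * C := if o is Some t then (1, t) else (0, 1).

Definition cls1 (a b : C) : option C := if a == 0 then None else Some (b / a).

Definition pt (k : nat) := {ffun 'I_k -> option C}.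

(* S^{d_1}C^2 (x) ... (x) S^{d_k}C^2 identified with multihomogeneous forms of
   multidegree (d_1,...,d_k) in the variables x_i = 'X_(lshift k i),
   y_i = 'X_(rshift k i) of {mpoly C[k + k]}. *)
Definition xv (k : nat) (i : 'I_k) : {mpoly C[k + k]} := 'X_(lshift k i).
Definition yv (k : nat) (i : 'I_k) : {mpoly C[k + k]} := 'X_(rshift k i).

(* affine representative of nu_{d_1..d_k}(p) = v_1^{d_1} (x) ... (x) v_k^{d_k} *)
Definition nu (k : nat) (d : 'I_k -> nat) (p : pt k) : {mpoly C[k + k]} :=
  \prod_(i < k) ((rep1 (p i)).1 *: xv i + (rep1 (p i)).2 *: yv i) ^+ d i.

Definition Wten (k : nat) (d : 'I_k -> nat) : {mpoly C[k + k]} :=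
  \prod_(i < k) (xv i ^+ (d i).-1 * yv i).

Definition in_span (k : nat) (d : 'I_k -> nat) (q : {mpoly C[k + k]})
  (A : {fset pt k}) : Prop :=
  exists c : pt k -> C, q = \sum_(a <- A) c a *: nu d a.

Definition is_rank (k : nat) (d : 'I_k -> nat) (q : {mpoly C[k + k]}) (r : nat)
  : Prop :=
  (exists A : {fset pt k}, #|` A| = r /\ in_span d q A) /\
  (forall A : {fset pt k}, in_span d q A -> (r <= #|` A|)%N).

(* S(q, X) for r = R_X(q): the sets of r points of X spanning q
   (points of X are recorded through their parameters p, nu being injective) *)
Definition Sdec (k : nat) (d : 'I_k -> nat) (q : {mpoly C[k + k]}) (r : nat)
  (A : {fset pt k}) : Prop :=
  #|` A| = r /\ in_span d q A.

(* coordinates of an r-tuple of points of (P^1)^k, given by representatives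
   w j i = (a, b) (i.e. a x_i + b y_i) of the i-th factor of the j-th point *)
Definition nvars (r k : nat) := #|{: 'I_r * 'I_k * bool}|.

Definition env (r k : nat) (w : 'I_r -> 'I_k -> C * C) : 'I_(nvars r k) -> C :=
  fun l => let: (j, i, b) := enum_val l in if b then (w j i).2 else (w j i).1.

Definition cls_conf (r k : nat) (w : 'I_r -> 'I_k -> C * C) : 'I_r -> pt k :=
  fun j => [ffun i => cls1 (w j i).1 (w j i).2].

(* Q is (the preimage in X^r of) a Zariski closed subset of X^(r) = X^r / S_r:
   it is S_r-invariant and its affine cone in (C^2 \ 0)^(k r) is the common
   zero locus of a family F of polynomials in the 2kr coordinates. *)
Definition sym_closed (r k : nat) (Q : ('I_r -> pt k) -> Prop) : Prop :=
  (forall (s : 'S_r) (t : 'I_r -> pt k), Q t <-> Q (fun j => t (s j))) /\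
  exists F : {mpoly C[nvars r k]} -> Prop,
    forall w : 'I_r -> 'I_k -> C * C,
      (forall j i, w j i != (0, 0)) ->
      (Q (cls_conf w) <-> forall f, F f -> meval (env w) f = 0).

Definition tuple_of (r k : nat) (t : 'I_r -> pt k) (A : {fset pt k}) : Prop :=
  injective t /\ forall x : pt k, x \in A <-> exists j, t j = x.

Definition subS (k : nat) (Y Z : {fset pt k} -> Prop) : Prop :=
  forall A, Y A -> Z A.

Definition closed_in (r k : nat) (S Z : {fset pt k} -> Prop) : Prop :=
  subS Z S /\
  exists Q, sym_closed Q /\
    forall A, S A -> (Z A <-> exists t : 'I_r -> pt k, tuple_of t A /\ Q t).

Definition irreducible_in (r k : nat) (S Y : {fset pt k} -> Prop) : Prop :=
  subS Y S /\ (exists A, Y A) /\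
  forall Z1 Z2, closed_in r S Z1 -> closed_in r S Z2 ->
    (forall A, Y A -> Z1 A \/ Z2 A) -> subS Y Z1 \/ subS Y Z2.

Definition irr_component (r k : nat) (S G : {fset pt k} -> Prop) : Prop :=
  irreducible_in r S G /\
  forall Y, irreducible_in r S Y -> subS G Y -> subS Y G.

(* (Krull) dimension of the subspace G of S is >= n: there is a chain
   Y_0 < Y_1 < ... < Y_n of irreducible closed subsets of G *)
Definition dim_ge (r k : nat) (S G : {fset pt k} -> Prop) (n : nat) : Prop :=
  exists Y : nat -> {fset pt k} -> Prop,
    (forall m, (m <= n)%N ->
       irreducible_in r S (Y m) /\
       exists Z, closed_in r S Z /\ forall A, Y m A <-> G A /\ Z A) /\
    (forall m, (m < n)%N ->
       subS (Y m) (Y m.+1) /\ exists A, Y m.+1 A /\ ~ Y m A).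

End SegreVeronese.

(* The torus (C^* )^k, whose i-th factor rescales y_i, fixes [T] (each y_i occurs
   exactly once in T) and therefore acts on the decompositions of T.  Because
   closed sets are cut out by polynomials, the orbit of an irreducible set of
   decompositions under a one-parameter subgroup is again irreducible, so an
   irreducible component is stable under the whole torus.  Every decomposition
   of T contains a point none of whose coordinates is [x_i] or [y_i] (otherwise
   the coefficient of the monomial T itself would vanish), and the torus moves
   such a point to any given p of the same kind.  Sweeping one decomposition by
   the first m one-parameter subgroups, m = 0, ..., k, and taking closures gives
   a chain of k + 1 irreducible closed subsets of the component, strict because
   the m-th subgroup is the first one to move the m-th coordinates. *)
From Pilot Require Import Defs.
From HB Require Import structures.
From mathcomp Require Import all_boot all_fingroup all_algebra finmap.
From mathcomp Require Import mpoly.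
From mathcomp Require Import complex.
From mathcomp Require Import reals.
From Stdlib Require Import Classical FunctionalExtensionality.

Set Implicit Arguments.
Unset Strict Implicit.
Unset Printing Implicit Defensive.

Import GRing.Theory Num.Theory.
Local Open Scope ring_scope.

Section TorusAction.
Variables (C : fieldType) (k : nat).
Implicit Types (i : 'I_k) (mu : C) (a : pt C k) (A : {fset pt C k}).
Local Open Scope fset_scope.

(* In the chart [x + t y] = Some t, rescaling y by mu sends t to mu t; the
   points [y] = None and [x] = Some 0 are fixed. *)
Definition scale_pt i mu a : pt C k :=
  [ffun j => if j == i then omap ( *%R mu) (a j) else a j].

Definition scale_fset i mu A : {fset pt C k} := [fset scale_pt i mu a | a in A].

Lemma scale_ptK i mu : mu != 0 -> cancel (scale_pt i mu) (scale_pt i mu^-1).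
Proof.
move=> mu0 a; apply/ffunP => j; rewrite !ffunE.
by case: eqP => [->|//]; case: (a i) => //= t; rewrite mulKf.
Qed.

Lemma scale_pt_inj i mu : mu != 0 -> injective (scale_pt i mu).
Proof. by move=> mu0; apply: can_inj (scale_ptK i mu0). Qed.

Lemma scale_pt1 i a : scale_pt i 1 a = a.
Proof.
apply/ffunP => j; rewrite !ffunE.
by case: eqP => [->|//]; case: (a i) => //= t; rewrite mul1r.
Qed.

Lemma scale_fset1 i A : scale_fset i 1 A = A.
Proof.
apply/fsetP => a; apply/imfsetP/idP => [[b bA ->]|aA]; first by rewrite scale_pt1.
by exists a; rewrite ?scale_pt1.
Qed.

Lemma card_scale_fset i mu A : mu != 0 -> #|` scale_fset i mu A| = #|` A|.
Proof. by move=> mu0; rewrite card_imfset //; apply: scale_pt_inj. Qed.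

Lemma mem_scale_fset i mu A a :
  mu != 0 -> (scale_pt i mu a \in scale_fset i mu A) = (a \in A).
Proof. by move=> mu0; rewrite mem_imfset //; apply: scale_pt_inj. Qed.

Lemma scale_pt_move i a (o : option C) :
  a i != None /\ a i != Some 0 -> o != None /\ o != Some 0 ->
  exists2 mu, mu != 0 & scale_pt i mu a = [ffun j => if j == i then o else a j].
Proof.
case ai: (a i) => [t|] [] // _ t_neq0; case: o => [u|] [] // _ u_neq0.
have t0 : t != 0 by apply: contraNneq t_neq0 => ->.
have u0 : u != 0 by apply: contraNneq u_neq0 => ->.
exists (u / t); first by rewrite mulf_neq0 ?invr_eq0.
by apply/ffunP => j; rewrite !ffunE; case: eqP => [->|//]; rewrite ai /= divfK.
Qed.

Lemma tuple_of_exists r A : #|` A| = r -> exists t : 'I_r -> pt C k, Defs.tuple_of t A.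
Proof.
move=> cA; pose a0 : pt C k := [ffun => None].
exists (fun j => nth a0 A j); split.
  move=> j1 j2 /eqP; rewrite nth_uniq ?fset_uniq ?cA ?ltn_ord //.
  by move/eqP/val_inj.
move=> a; split => [aA|[j <-]]; last by rewrite mem_nth // cA.
have ltr : (index a A < r)%N by rewrite -cA index_mem.
by exists (Ordinal ltr); rewrite /= nth_index.
Qed.

Lemma tuple_of_perm r A (t t' : 'I_r -> pt C k) :
  Defs.tuple_of t A -> Defs.tuple_of t' A -> exists s : 'S_r, t' = (fun j => t (s j)).
Proof.
move=> [t_inj tA] [t'_inj t'A].
have t'_in_t j : exists j', t j' = t' j by apply/tA/t'A; exists j.
pose f j := odflt j [pick j' | t j' == t' j].
have tf j : t (f j) = t' j.
  rewrite /f; case: pickP => [j' /eqP //|none].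
  by have [j' e] := t'_in_t j; move: (none j'); rewrite e eqxx.
have f_inj : injective f by move=> j1 j2 e; apply: t'_inj; rewrite -!tf e.
by exists (perm f_inj); apply: functional_extensionality => j; rewrite permE tf.
Qed.

Lemma tuple_of_scale r i mu A (t : 'I_r -> pt C k) : mu != 0 -> Defs.tuple_of t A ->
  Defs.tuple_of (fun j => scale_pt i mu (t j)) (scale_fset i mu A).
Proof.
move=> mu0 [t_inj tA]; split; first by move=> j1 j2 /(scale_pt_inj mu0) /t_inj.
move=> a; split; first by move=> /imfsetP [b /tA [j <-] ->]; exists j.
by move=> [j <-]; apply/imfsetP; exists (t j) => //; apply/tA; exists j.
Qed.

End TorusAction.

Lemma exists_notin (T : eqType) (f : nat -> T) (s : seq T) :
  injective f -> exists n, f n \notin s.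
Proof.
move=> f_inj; have uf : uniq [seq f n | n <- iota 0 (size s).+1].
  by rewrite map_inj_uniq ?iota_uniq.
have /allPn [_ /mapP [n _ ->] fn_s] : ~~ all (mem s) [seq f n | n <- iota 0 (size s).+1].
  apply/negP => /allP /(uniq_leq_size uf).
  by rewrite size_map size_iota ltnn.
by exists n.
Qed.

Section MultivariateEvaluation.
Variable R : comNzRingType.

Lemma meval_scale_vars n (c : 'I_n -> R) (f : {mpoly R[n]}) :
  exists g : {mpoly R[n]}, forall v, g.@[v] = f.@[fun l => c l * v l].
Proof.
exists (f \mPo [tuple c l *: 'X_l | l < n]) => v.
rewrite comp_mpoly_meval; apply: meval_eq => l.
by rewrite tnth_mktuple mevalZ mevalXU.
Qed.

Lemma meval_affine_line n (a b : 'I_n -> R) (f : {mpoly R[n]}) :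
  exists P : {poly R}, forall mu, P.[mu] = f.@[fun l => a l + mu * b l].
Proof.
exists (\sum_(m <- msupp f) f@_m *: \prod_(l < n) ((a l)%:P + b l *: 'X) ^+ m l).
move=> mu; rewrite mevalE horner_sum; apply: eq_bigr => m _.
rewrite hornerZ horner_prod; congr (_ * _); apply: eq_bigr => l _.
by rewrite horner_exp hornerD hornerC hornerZ hornerX mulrC.
Qed.

End MultivariateEvaluation.

Section NonRoots.
Variable R : numDomainType.

Lemma exists_nat_nonroot (P : {poly R}) : P != 0 -> exists n, ~~ root P n.+1%:R.
Proof.
move=> P_neq0; set s := [seq n.+1%:R : R | n <- iota 0 (size P)].
have us : uniq s.
  by rewrite map_inj_uniq ?iota_uniq // => m n /eqP; rewrite eqr_nat => /eqP [].
have /allPn [_ /mapP [n _ ->] Pn] : ~~ all (root P) s.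
  apply/negP => /(max_poly_roots P_neq0)/(_ us).
  by rewrite size_map size_iota ltnn.
by exists n.
Qed.

Lemma exists_common_nonroot (P1 P2 : {poly R}) mu1 mu2 :
  P1.[mu1] != 0 -> P2.[mu2] != 0 ->
  exists mu, [/\ mu != 0, P1.[mu] != 0 & P2.[mu] != 0].
Proof.
move=> P1mu1 P2mu2; have P_neq0 : P1 * P2 * 'X != 0.
  rewrite !mulf_neq0 ?polyX_eq0 //.
    by apply: contraNneq P1mu1 => ->; rewrite horner0.
  by apply: contraNneq P2mu2 => ->; rewrite horner0.
have [n] := exists_nat_nonroot P_neq0.
rewrite rootE !hornerM hornerX !mulf_eq0 !negb_or => /andP [/andP [P1n P2n] n0].
by exists n.+1%:R.
Qed.

End NonRoots.

Section Coordinates.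
Variable C : fieldType.

Lemma cls1_rep1 (o : option C) : cls1 (rep1 o).1 (rep1 o).2 = o.
Proof. by case: o => [t|] /=; rewrite /cls1 ?oner_eq0 ?eqxx ?divr1. Qed.

Lemma rep1_neq0 (o : option C) : rep1 o != (0, 0).
Proof. by case: o => [t|] /=; rewrite xpair_eqE ?oner_eq0 ?andbF. Qed.

Lemma cls1_scale (mu a b : C) : cls1 a (mu * b) = omap ( *%R mu) (cls1 a b).
Proof. by rewrite /cls1; case: eqP => //= _; rewrite mulrA. Qed.

Lemma cls1_eqE (v : C * C) (o : option C) : v != (0, 0) ->
  cls1 v.1 v.2 = o <-> v.1 * (rep1 o).2 - v.2 * (rep1 o).1 = 0.
Proof.
case: v => a b /= v_neq0; rewrite /cls1; case: o => [t|] /=; last first.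
  by rewrite mulr1 mulr0 subr0; case: eqP.
rewrite mulr1; case: eqP => [a0|/eqP a0]; split => //.
- move: v_neq0; rewrite a0 mul0r sub0r => v_neq0 /eqP; rewrite oppr_eq0 => /eqP b0.
  by move: v_neq0; rewrite b0 eqxx.
- by case=> <-; rewrite mulrCA mulfV // mulr1 subrr.
- by move/eqP; rewrite subr_eq0 => /eqP <-; rewrite mulrAC divff // mul1r.
Qed.

Variables k r : nat.
Implicit Types (i : 'I_k) (mu : C) (w : 'I_r -> 'I_k -> C * C).

Definition scale_coords i mu w : 'I_r -> 'I_k -> C * C :=
  fun j i' => if i' == i then ((w j i').1, mu * (w j i').2) else w j i'.

Definition is_y_coord i (l : 'I_(nvars r k)) : bool :=
  let: (_, i', b) := enum_val l in (i' == i) && b.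

Lemma env_scale_coords i mu w l :
  env (scale_coords i mu w) l = (if is_y_coord i l then mu else 1) * env w l.
Proof.
rewrite /env /is_y_coord /scale_coords; case: (enum_val l) => [[j i'] b] /=.
by case: eqP => _; case: b => /=; rewrite ?mul1r.
Qed.

Lemma cls_conf_scale_coords i mu w :
  cls_conf (scale_coords i mu w) = fun j => scale_pt i mu (cls_conf w j).
Proof.
apply: functional_extensionality => j; apply/ffunP => i'.
by rewrite /cls_conf /scale_coords !ffunE; case: eqP => // _; rewrite cls1_scale.
Qed.

Lemma scale_coords_neq0 i mu w : mu != 0 -> (forall j i', w j i' != (0, 0)) ->
  forall j i', scale_coords i mu w j i' != (0, 0).
Proof.
move=> mu0 w_neq0 j i'; rewrite /scale_coords; case: (i' =P i) => _; last exact: w_neq0.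
move: (w_neq0 j i'); case: (w j i') => a b /=.
by rewrite !xpair_eqE mulf_eq0 (negbTE mu0).
Qed.

Definition rep_conf (t : 'I_r -> pt C k) : 'I_r -> 'I_k -> C * C :=
  fun j i => rep1 (t j i).

Lemma cls_conf_rep_conf t : cls_conf (rep_conf t) = t.
Proof.
apply: functional_extensionality => j; apply/ffunP => i.
by rewrite /cls_conf /rep_conf ffunE cls1_rep1.
Qed.

Lemma rep_conf_neq0 t j i : rep_conf t j i != (0, 0).
Proof. exact: rep1_neq0. Qed.

End Coordinates.

Section ClosedSets.
Variables (C : fieldType) (k r : nat) (S : {fset pt C k} -> Prop).
Hypothesis S_card : forall A, S A -> #|` A|%fset = r.
Hypothesis S_scale : forall i mu A, mu != 0 -> S A -> S (scale_fset i mu A).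
Implicit Types (A B : {fset pt C k}) (O Y Z : {fset pt C k} -> Prop).

Lemma closed_inP Z : closed_in r S Z -> exists Q : ('I_r -> pt C k) -> Prop,
  sym_closed Q /\ forall A t, S A -> Defs.tuple_of t A -> (Z A <-> Q t).
Proof.
move=> [_ [Q [[Q_sym QF] ZQ]]]; exists Q; split => // A t SA tA.
rewrite ZQ //; split => [[t' [t'A Qt']]|Qt]; last by exists t.
by have [s t'E] := tuple_of_perm tA t'A; apply/(Q_sym s); rewrite -t'E.
Qed.

Definition preimage_scale i mu Z A := S A /\ Z (scale_fset i mu A).

Lemma closed_in_preimage_scale i mu Z :
  mu != 0 -> closed_in r S Z -> closed_in r S (preimage_scale i mu Z).
Proof.
move=> mu0 /closed_inP [Q [[Q_sym [F QF]] ZQ]].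
split; first by move=> A [].
exists (fun t => Q (fun j => scale_pt i mu (t j))); split; first split.
- by move=> s t; apply: (Q_sym s (fun j => scale_pt i mu (t j))).
- exists (fun g => exists2 f, F f & forall v,
    g.@[v] = f.@[fun l => (if is_y_coord i l then mu else 1) * v l]).
  move=> w w_neq0; rewrite -cls_conf_scale_coords QF; last exact: scale_coords_neq0.
  split => [Fw g [f Ff ->]|Fw f Ff].
  + by rewrite -(Fw f Ff); apply: meval_eq => l; rewrite env_scale_coords.
  + have [g gE] := meval_scale_vars (fun l => if is_y_coord i l then mu else 1) f.
    rewrite (meval_eq f (env_scale_coords i mu w)) -gE.
    by apply: Fw; exists f.
- move=> A SA; have [t tA] := tuple_of_exists (S_card SA).
  have ZQt := ZQ _ _ (S_scale i mu0 SA) (tuple_of_scale i mu0 tA).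
  split => [[_ /ZQt Qt]|[t' [t'A Qt']]]; first by exists t.
  have [s t'E] := tuple_of_perm tA t'A.
  by split => //; apply/ZQt/(Q_sym s); rewrite t'E in Qt'.
Qed.

Lemma irreducible_in_set1 A : S A -> irreducible_in r S (fun B => B = A).
Proof.
move=> SA; split; [by move=> B -> | split; first by exists A].
by move=> Z1 Z2 _ _ /(_ A erefl) [Z1A|Z2A]; [left|right] => B ->.
Qed.

Definition closure_in O A := S A /\ forall Z, closed_in r S Z -> subS O Z -> Z A.

Lemma closure_in_min O Z : closed_in r S Z -> subS O Z -> subS (closure_in O) Z.
Proof. by move=> cZ OZ A [_]; apply. Qed.

Lemma subS_closure_in O : subS O S -> subS O (closure_in O).
Proof. by move=> OS A OA; split=> [|Z _]; [apply: OS | apply]. Qed.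

Lemma closure_in_mono O1 O2 : subS O1 O2 -> subS (closure_in O1) (closure_in O2).
Proof. by move=> O12 A [SA O1A]; split => // Z cZ O2Z; apply: O1A => // B /O12 /O2Z. Qed.

(* An intersection of closed sets: its defining polynomials are those of all
   the closed sets containing O. *)
Lemma closed_in_closure_in O : closed_in r S (closure_in O).
Proof.
split; first by move=> A [].
pose defines Z (Q : ('I_r -> pt C k) -> Prop) := [/\ subS Z S, subS O Z, sym_closed Q &
  forall A, S A -> (Z A <-> exists t, Defs.tuple_of t A /\ Q t)].
exists (fun t => forall Z Q, defines Z Q -> Q t : Prop); split; first split.
- by move=> s t; split => Qt Z Q dZQ; case: (dZQ) => _ _ [/(_ s t) Q_sym _] _;
    apply/Q_sym; apply: Qt dZQ.
- exists (fun f => exists Z Q (F : {mpoly C[nvars r k]} -> Prop), [/\ defines Z Q,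
    (forall w, (forall j i, w j i != (0, 0)) ->
      (Q (cls_conf w) <-> forall g, F g -> g.@[env w] = 0)) & F f]).
  move=> w w_neq0; split => [Qw f [Z [Q [F [dZQ /(_ w w_neq0) QF Ff]]]]|Fw Z Q dZQ].
    exact: (proj1 QF (Qw Z Q dZQ)).
  case: (dZQ) => _ _ [_ [F QF]] _; apply/(QF w w_neq0) => g Fg.
  by apply: Fw; exists Z, Q, F.
- move=> A SA; split => [[_ OA]|[t [tA Qt]]].
    have [t tA] := tuple_of_exists (S_card SA); exists t; split => // Z Q dZQ.
    case: (dZQ) => ZS OZ Q_sc ZQ.
    have [t' [t'A Qt']] : exists t', Defs.tuple_of t' A /\ Q t'.
      by apply/ZQ => //; apply: OA => //; split => //; exists Q.
    by have [s t'E] := tuple_of_perm tA t'A; apply/(Q_sc.1 s); rewrite -t'E.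
  split => // Z [ZS [Q [Q_sc ZQ]]] OZ.
  by apply/(ZQ A SA); exists t; split => //; apply: (Qt Z).
Qed.

Lemma irreducible_in_closure O Y : irreducible_in r S O ->
  subS O Y -> subS Y (closure_in O) -> irreducible_in r S Y.
Proof.
move=> [OS [[A OA] O_irr]] OY YO; split; [|split].
- by move=> B /YO [].
- by exists A; apply: OY.
move=> Z1 Z2 cZ1 cZ2 Y12.
by case: (O_irr Z1 Z2 cZ1 cZ2 (fun B OB => Y12 B (OY B OB))) => OZ;
  [left|right] => B /YO; apply: closure_in_min.
Qed.

Definition coord_in i (V : {fset option C}) A :=
  S A /\ forall a, (a \in A)%fset -> (a i \in V)%fset.

Lemma closed_in_coord_in i V : closed_in r S (coord_in i V).
Proof.
split; first by move=> A [].
exists (fun t => forall j, (t j i \in V)%fset); split; first split.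
- move=> s t; split => tV j; first exact: tV.
  by have := tV ((s^-1)%g j); rewrite permKV.
- pose x j := 'X_(enum_rank (j, i, false)) : {mpoly C[nvars r k]}.
  pose y j := 'X_(enum_rank (j, i, true)) : {mpoly C[nvars r k]}.
  exists (fun f => exists j,
    f = \prod_(v <- V) (x j * ((rep1 v).2)%:MP - y j * ((rep1 v).1)%:MP)).
  have evalE w j v : (x j * ((rep1 v).2)%:MP - y j * ((rep1 v).1)%:MP).@[env w]
      = (w j i).1 * (rep1 v).2 - (w j i).2 * (rep1 v).1.
    by rewrite mevalB !mevalM !mevalXU !mevalC /env !enum_rankK.
  move=> w w_neq0; split => [wV f [j ->]|Vw j].
  + rewrite rmorph_prod /=; apply/eqP; rewrite prodf_seq_eq0.
    apply/hasP; exists (cls_conf w j i); first exact: wV.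
    by rewrite /= evalE; apply/eqP/(cls1_eqE _ (w_neq0 j i)); rewrite ffunE.
  + have /eqP := Vw _ (ex_intro _ j erefl).
    rewrite rmorph_prod prodf_seq_eq0 => /hasP [v vV] /=.
    rewrite evalE => /eqP /(cls1_eqE _ (w_neq0 j i)) wv.
    by rewrite /cls_conf ffunE wv.
- move=> A SA; split => [[_ AV]|[t [tA tV]]].
    have [t tA] := tuple_of_exists (S_card SA); exists t; split => // j.
    by apply: AV; apply/(tA.2 (t j)); exists j.
  by split => // a /(tA.2 a) [j <-]; apply: tV.
Qed.

End ClosedSets.

Lemma not_subS (C : fieldType) k (Y Z : {fset pt C k} -> Prop) :
  ~ subS Y Z -> exists A, Y A /\ ~ Z A.
Proof.
move=> YZ; apply: NNPP => none; apply: YZ => A YA.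
by apply: NNPP => ZA; apply: none; exists A.
Qed.

Section Orbits.
Variables (C : numFieldType) (k r : nat) (S : {fset pt C k} -> Prop).
Hypothesis S_card : forall A, S A -> #|` A|%fset = r.
Hypothesis S_scale : forall i mu A, mu != 0 -> S A -> S (scale_fset i mu A).
Implicit Types (A B : {fset pt C k}) (Y Z : {fset pt C k} -> Prop).

Definition scale_orbit i Y B :=
  exists mu B', [/\ mu != 0, Y B' & B = scale_fset i mu B'].

Lemma closed_in_scale_zero i Z B mu1 : closed_in r S Z -> S B -> mu1 != 0 ->
  ~ Z (scale_fset i mu1 B) ->
  exists P : {poly C}, P.[mu1] != 0 /\
    forall mu, mu != 0 -> Z (scale_fset i mu B) -> P.[mu] = 0.
Proof.
move=> /closed_inP [Q [[_ [F QF]] ZQ]] SB mu10 Zmu1.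
have [t tB] := tuple_of_exists (S_card SB); set w := rep_conf t.
have ZE mu : mu != 0 ->
    Z (scale_fset i mu B) <-> forall f, F f -> f.@[env (scale_coords i mu w)] = 0.
  move=> mu0; rewrite (ZQ _ _ (S_scale i mu0 SB) (tuple_of_scale i mu0 tB)).
  rewrite -QF ?cls_conf_scale_coords ?cls_conf_rep_conf //.
  exact: scale_coords_neq0 (@rep_conf_neq0 _ _ _ t).
have [f Ff fmu1] : exists2 f, F f & f.@[env (scale_coords i mu1 w)] != 0.
  apply: NNPP => none; apply/Zmu1/(ZE _ mu10) => f Ff.
  by apply/eqP/negPn/negP => fmu1; apply: none; exists f.
have [P PE] := meval_affine_line (fun l => if is_y_coord i l then 0 else env w l)
  (fun l => if is_y_coord i l then env w l else 0) f.
have Pmu mu : P.[mu] = f.@[env (scale_coords i mu w)].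
  rewrite PE; apply: meval_eq => l; rewrite env_scale_coords.
  by case: is_y_coord; rewrite ?add0r ?mulr0 ?addr0 ?mul1r.
by exists P; split => [|mu mu0 /(ZE mu mu0) /(_ f Ff)]; rewrite Pmu.
Qed.

Lemma irreducible_in_scale_orbit i Y :
  irreducible_in r S Y -> irreducible_in r S (scale_orbit i Y).
Proof.
move=> [YS [[A0 YA0] Y_irr]]; split; [|split].
- by move=> _ [mu [B [mu0 YB ->]]]; apply: S_scale (YS B YB).
- by exists A0, 1, A0; rewrite scale_fset1 oner_neq0.
move=> Z1 Z2 cZ1 cZ2 cover.
have Y_pre mu : mu != 0 ->
    subS Y (preimage_scale S i mu Z1) \/ subS Y (preimage_scale S i mu Z2).
  move=> mu0; apply: Y_irr; try exact: closed_in_preimage_scale.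
  move=> A YA; have SA := YS A YA.
  have : Z1 (scale_fset i mu A) \/ Z2 (scale_fset i mu A).
    by apply: cover; exists mu, A.
  by case; [left|right].
have [?|] := classic (subS (scale_orbit i Y) Z1); first by left.
move=> /not_subS [_ [[mu1 [B1 [mu10 YB1 ->]]] nZ1]].
have [?|] := classic (subS (scale_orbit i Y) Z2); first by right.
move=> /not_subS [_ [[mu2 [B2 [mu20 YB2 ->]]] nZ2]].
have [P1 [P1mu1 P1Z]] := closed_in_scale_zero cZ1 (YS B1 YB1) mu10 nZ1.
have [P2 [P2mu2 P2Z]] := closed_in_scale_zero cZ2 (YS B2 YB2) mu20 nZ2.
have [mu [mu0 P1mu P2mu]] := exists_common_nonroot P1mu1 P2mu2.
case: (Y_pre mu mu0) => [/(_ B1 YB1) [_ /(P1Z mu mu0)]|/(_ B2 YB2) [_ /(P2Z mu mu0)]].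
  by move/eqP; rewrite (negbTE P1mu).
by move/eqP; rewrite (negbTE P2mu).
Qed.

End Orbits.

Lemma prod_scale_at (R : comNzRingType) (A : comAlgType R) n (i : 'I_n) c
    (F : 'I_n -> A) :
  \prod_j (if j == i then c *: F j else F j) = c *: \prod_j F j.
Proof.
rewrite (bigD1 i) //= eqxx [in RHS](bigD1 i) //= -scalerAl.
by congr (_ *: (_ * _)); apply: eq_bigr => j /negbTE ->.
Qed.

Section Equivariance.
Variables (C : fieldType) (k : nat) (d : 'I_k -> nat).

Section ScaleY.
Variables (i : 'I_k) (mu : C).

Definition scale_y : (k + k).-tuple {mpoly C[k + k]} :=
  [tuple if l == rshift k i then mu *: 'X_l else 'X_l | l < k + k].

Lemma comp_xv_scale_y j : xv C j \mPo scale_y = xv C j.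
Proof. by rewrite comp_mpolyXU -tnth_nth tnth_mktuple eq_shift. Qed.

Lemma comp_yv_scale_y j :
  yv C j \mPo scale_y = if j == i then mu *: yv C j else yv C j.
Proof. by rewrite comp_mpolyXU -tnth_nth tnth_mktuple eq_shift. Qed.

(* x_i + t y_i becomes x_i + (mu t) y_i, but y_i^(d_i) becomes mu^(d_i) y_i^(d_i). *)
Definition nu_scale_factor (a : pt C k) : C := if a i is None then mu ^+ d i else 1.

Lemma comp_nu_scale_y a :
  nu d a \mPo scale_y = nu_scale_factor a *: nu d (scale_pt i mu a).
Proof.
rewrite /nu rmorph_prod -(prod_scale_at i); apply: eq_bigr => j _.
rewrite rmorphXn rmorphD /= !comp_mpolyZ comp_xv_scale_y comp_yv_scale_y ffunE.
case: (j =P i) => [->|_] //; rewrite /nu_scale_factor.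
case: (a i) => [t|] /=; first by rewrite !scale1r scalerA mulrC.
by rewrite !scale0r !add0r !scale1r exprZn.
Qed.

Lemma comp_Wten_scale_y : Wten C d \mPo scale_y = mu *: Wten C d.
Proof.
rewrite /Wten rmorph_prod -(prod_scale_at i); apply: eq_bigr => j _.
rewrite rmorphM rmorphXn /= comp_xv_scale_y comp_yv_scale_y.
by case: eqP => _ //; rewrite scalerAr.
Qed.

End ScaleY.

Lemma in_span_scale i mu A : mu != 0 -> in_span d (Wten C d) A ->
  in_span d (Wten C d) (scale_fset i mu A).
Proof.
move=> mu0 [c WE]; pose a_of b := scale_pt i mu^-1 b.
exists (fun b => mu^-1 * c (a_of b) * nu_scale_factor i mu (a_of b)).
have muWE : mu *: Wten C d = \sum_(a <- A) ((c a *: nu d a) \mPo scale_y i mu).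
  by rewrite -(comp_Wten_scale_y i) WE raddf_sum.
rewrite /scale_fset big_imfset /=; last by move=> a b _ _; apply: scale_pt_inj.
apply: (scalerI mu0); rewrite muWE scaler_sumr; apply: eq_bigr => a _.
rewrite comp_mpolyZ comp_nu_scale_y /a_of scale_ptK //.
by rewrite !scalerA !mulrA mulfV // mul1r mulrC.
Qed.

End Equivariance.

Lemma mcoeff_XnM_eq0 (R : comNzRingType) n (l : 'I_n) e (h : {mpoly R[n]})
    (m : 'X_{1.. n}) :
  (m l < e)%N -> ('X_l ^+ e * h)@_m = 0.
Proof.
move=> ml_lt; rewrite [h]mpolyE mulr_sumr raddf_sum /=; apply: big1 => m' _.
rewrite -scalerAr mcoeffZ mpolyXn -mpolyXD mcoeffX.
suff /negbTE -> : (U_(l) *+ e + m')%MM != m by rewrite mulr0.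
apply: contraTneq ml_lt => <-.
by rewrite -leqNgt mnmDE mulmnE mnm1E eqxx mul1n leq_addr.
Qed.

Definition generic_pt (C : fieldType) k (a : pt C k) :=
  forall j, a j != None /\ a j != Some 0.

Section GenericPoint.
Variables (C : fieldType) (k : nat) (d : 'I_k -> nat).

Definition Wten_mnm : 'X_{1.. k + k} :=
  [multinom [tuple if split l is inl j then (d j).-1 else 1%N | l < k + k]].

Lemma Wten_mnm_x j : Wten_mnm (lshift k j) = (d j).-1.
Proof. by rewrite mnmE (unsplitK (inl j)). Qed.

Lemma Wten_mnm_y j : Wten_mnm (rshift k j) = 1%N.
Proof. by rewrite mnmE (unsplitK (inr j)). Qed.

Lemma Wten_monomial : Wten C d = 'X_[Wten_mnm].
Proof.
rewrite mpolyXE_id big_split_ord /= /Wten big_split /=; congr (_ * _).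
  by apply: eq_bigr => j _; rewrite Wten_mnm_x.
by apply: eq_bigr => j _; rewrite Wten_mnm_y expr1.
Qed.

(* A factor x_j^(d_j) or y_j^(d_j) of nu(a) is too large a power to divide T. *)
Lemma mcoeff_nu_Wten_mnm_eq0 (a : pt C k) j : (1 < d j)%N ->
  (a j == None) || (a j == Some 0) -> (nu d a)@_Wten_mnm = 0.
Proof.
move=> dj_gt1 aj; rewrite /nu (bigD1 j) //=.
case: (a j) aj => [t /eqP [->]|_] /=.
  rewrite scale1r scale0r addr0; apply: mcoeff_XnM_eq0.
  by rewrite Wten_mnm_x prednK ?ltnSn // ltnW.
by rewrite scale0r add0r scale1r; apply: mcoeff_XnM_eq0; rewrite Wten_mnm_y.
Qed.

Lemma in_span_Wten_generic A : (forall j, 1 < d j)%N ->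
  in_span d (Wten C d) A -> exists2 a, (a \in A)%fset & generic_pt a.
Proof.
move=> d_gt1 [c WE].
have [a aA nz] : exists2 a, a \in (A : seq _) & (nu d a)@_Wten_mnm != 0.
  apply/hasP; apply: contraT => /hasPn nu_eq0.
  have : (Wten C d)@_Wten_mnm = 0.
    rewrite WE raddf_sum /=; apply: big1_seq => a /andP [_ aA].
    by rewrite mcoeffZ (eqP (negbNE (nu_eq0 a aA))) mulr0.
  by rewrite Wten_monomial mcoeffX eqxx => /eqP; rewrite oner_eq0.
exists a => // j; apply/andP; rewrite -negb_or.
by apply: contra nz => aj; apply/eqP/(mcoeff_nu_Wten_mnm_eq0 (d_gt1 j)).
Qed.

End GenericPoint.

Section Component.
Variables (C : numFieldType) (k : nat) (d : 'I_k -> nat) (r : nat).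
Local Notation S := (Sdec d (Wten C d) r).
Variable G : {fset pt C k} -> Prop.
Hypothesis G_comp : irr_component r S G.
Implicit Types (A B : {fset pt C k}).

Lemma Sdec_card A : S A -> #|` A|%fset = r.
Proof. by case. Qed.

Lemma Sdec_scale i mu A : mu != 0 -> S A -> S (scale_fset i mu A).
Proof.
by move=> mu0 [cardA spanA]; split; [rewrite card_scale_fset | apply: in_span_scale].
Qed.

Lemma irr_component_scale i mu B : mu != 0 -> G B -> G (scale_fset i mu B).
Proof.
move=> mu0 GB; case: G_comp => G_irr G_max.
apply: (G_max _ (irreducible_in_scale_orbit Sdec_card Sdec_scale i G_irr)).
  by move=> A GA; exists 1, A; rewrite scale_fset1 oner_neq0.
by exists mu, B.
Qed.

Variable A0 : {fset pt C k}.
Hypothesis GA0 : G A0.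

Fixpoint torus_sweep m : {fset pt C k} -> Prop :=
  if m is m'.+1 then
    if (insub m' : option 'I_k) is Some j then scale_orbit j (torus_sweep m')
    else torus_sweep m'
  else fun B => B = A0.

Lemma irreducible_in_torus_sweep m : irreducible_in r S (torus_sweep m).
Proof.
elim: m => [|m IHm] /=.
  by apply: irreducible_in_set1; case: G_comp => [[GS _] _]; apply: GS.
case: insubP => [j _ _|_] //.
exact: (irreducible_in_scale_orbit Sdec_card Sdec_scale j IHm).
Qed.

Lemma torus_sweep_sub m : subS (torus_sweep m) G.
Proof.
elim: m => [|m IHm] /=; first by move=> B ->.
case: insubP => [j _ _|_] // _ [mu [B [mu0 /IHm GB ->]]].
exact: irr_component_scale.
Qed.

Lemma torus_sweep_mono m : subS (torus_sweep m) (torus_sweep m.+1).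
Proof.
move=> B sB /=; case: insubP => [j _ _|_] //.
by exists 1, B; rewrite scale_fset1 oner_neq0.
Qed.

Lemma torus_sweep_A0 m : torus_sweep m A0.
Proof. by elim: m => [|m IHm] //; apply: torus_sweep_mono. Qed.

Lemma torus_sweep_coord m (j : 'I_k) B b : (m <= j)%N -> torus_sweep m B ->
  (b \in B)%fset -> (b j \in [fset a j | a : pt C k in A0])%fset.
Proof.
elim: m B b => [|m IHm] B b /= le_mj; first by move=> -> bA0; apply/imfsetP; exists b.
case: insubP => [j' _ j'E [mu [B' [mu0 sB' ->]]]|_ sB]; last exact: IHm (ltnW le_mj) _.
case/imfsetP => b' b'B' ->; rewrite ffunE.
have /negbTE -> : j != j' by apply: contraTneq le_mj => ->; rewrite j'E ltnn.
exact: IHm (ltnW le_mj) sB' b'B'.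
Qed.

Lemma torus_sweep_scale m (lt_mk : (m < k)%N) mu :
  mu != 0 -> torus_sweep m.+1 (scale_fset (Ordinal lt_mk) mu A0).
Proof.
move=> mu0 /=; case: insubP => [j _ jE|]; last by rewrite lt_mk.
have -> : j = Ordinal lt_mk by apply: val_inj.
by exists mu, A0; split => //; apply: torus_sweep_A0.
Qed.

Lemma torus_sweep_closure_strict m (lt_mk : (m < k)%N) a0 :
  (a0 \in A0)%fset -> generic_pt a0 ->
  exists B, torus_sweep m.+1 B /\ ~ closure_in r S (torus_sweep m) B.
Proof.
move=> a0A0 a0_gen; set j := Ordinal lt_mk.
set V := [fset a j | a : pt C k in A0]%fset.
case: (a0_gen j); case a0j: (a0 j) => [t|] // _ t_neq0.
have [n tn_notin] : exists n, Some (n.+1%:R * t) \notin (V : seq _).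
  apply: exists_notin => m1 m2 [] /(mulIf t_neq0) /eqP.
  by rewrite eqr_nat eqSS => /eqP.
have n_neq0 : n.+1%:R != 0 :> C by rewrite pnatr_eq0.
exists (scale_fset j n.+1%:R A0); split; first exact: torus_sweep_scale.
move=> /(closure_in_min (closed_in_coord_in Sdec_card j V)) V_cl.
have [_ /(_ (scale_pt j n.+1%:R a0))] : coord_in S j V (scale_fset j n.+1%:R A0).
  apply: V_cl => B sB; split; first exact: (proj1 G_comp).1 _ (torus_sweep_sub sB).
  by move=> b bB; apply: torus_sweep_coord sB bB.
by rewrite mem_scale_fset // ffunE eqxx a0j => /(_ a0A0); apply/negP.
Qed.

End Component.

Lemma irr_component_dim_ge (C : numFieldType) k (d : 'I_k -> nat) r G :
  (forall i, 1 < d i)%N -> irr_component r (Sdec d (Wten C d) r) G ->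
  dim_ge r (Sdec d (Wten C d) r) G k.
Proof.
move=> d_gt1 G_comp; have [[GS [[A0 GA0] _]] _] := G_comp.
have [a0 a0A0 a0_gen] := in_span_Wten_generic d_gt1 (GS _ GA0).2.
set S := Sdec d (Wten C d) r.
have sweep_S m : subS (torus_sweep A0 m) S.
  by move=> B /(torus_sweep_sub G_comp GA0) /GS.
have sweep_cl m :
    subS (torus_sweep A0 m) (fun A => G A /\ closure_in r S (torus_sweep A0 m) A).
  by move=> B sB; split; [exact: (torus_sweep_sub G_comp GA0 sB) | exact: subS_closure_in].
exists (fun m A => G A /\ closure_in r S (torus_sweep A0 m) A); split.
  move=> m _; split.
    apply: (irreducible_in_closure (irreducible_in_torus_sweep G_comp GA0 m)) => //.
    by move=> B [].
  exists (closure_in r S (torus_sweep A0 m)); split => //.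
  exact: (closed_in_closure_in (@Sdec_card C k d r)).
move=> m lt_mk; split.
  move=> B [GB clB]; split => //.
  exact: closure_in_mono (@torus_sweep_mono _ _ _ _) _ clB.
have [B [sB nclB]] := torus_sweep_closure_strict G_comp GA0 lt_mk a0A0 a0_gen.
by exists B; split; [exact: sweep_cl | case].
Qed.

Lemma irr_component_meets_generic (C : numFieldType) k (d : 'I_k -> nat) r G p :
  (forall i, 1 < d i)%N -> irr_component r (Sdec d (Wten C d) r) G ->
  generic_pt p -> exists A, G A /\ (p \in A)%fset.
Proof.
move=> d_gt1 G_comp p_gen; have [[GS [[A0 GA0] _]] _] := G_comp.
have [a0 a0A0 a0_gen] := in_span_Wten_generic d_gt1 (GS _ GA0).2.
pose mix (m : nat) : pt C k := [ffun j : 'I_k => if (j < m)%N then p j else a0 j].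
have mixP m : (m <= k)%N -> exists A, G A /\ (mix m \in A)%fset.
  elim: m => [_|m IHm lt_mk].
    by exists A0; split; rewrite // (_ : mix 0 = a0) //; apply/ffunP => j; rewrite ffunE.
  have [A [GA mixA]] := IHm (ltnW lt_mk); set j := Ordinal lt_mk.
  have mix_gen : mix m j != None /\ mix m j != Some 0.
    by rewrite ffunE ltnn; apply: a0_gen.
  have [mu mu0 muE] := scale_pt_move mix_gen (p_gen j).
  exists (scale_fset j mu A); split; first exact: (irr_component_scale G_comp j mu0 GA).
  suff <- : scale_pt j mu (mix m) = mix m.+1 by rewrite mem_scale_fset.
  apply/ffunP => l; rewrite muE !ffunE ltnS.
  case: (l =P j) => [->|/eqP]; first by rewrite leqnn.
  by rewrite [(l <= m)%N]leq_eqVlt -(inj_eq val_inj) => /negbTE ->.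
have [A [GA mixA]] := mixP k (leqnn k).
by exists A; split; rewrite // (_ : p = mix k) //; apply/ffunP => j; rewrite ffunE ltn_ord.
Qed.

Unset Implicit Arguments.
Local Open Scope fset_scope.

(* Neither k >= 1 nor the value of the rank is needed: the argument applies to
   the decompositions of T of any fixed length r. *)
Theorem proposition5p4 (R : realType) (k : nat) (d : 'I_k -> nat) (r : nat)
  (G : {fset pt R[i] k} -> Prop) :
  (1 <= k)%N ->
  (forall i, 2 <= d i)%N ->
  is_rank d (Wten R[i] d) r ->
  irr_component r (Sdec d (Wten R[i] d) r) G ->
  dim_ge r (Sdec d (Wten R[i] d) r) G k /\
  forall p : pt R[i] k,
    (forall i, p i != None /\ p i != Some 0) ->
    exists A : {fset pt R[i] k}, G A /\ p \in A.
Proof.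
move=> _ d_gt1 _ G_comp; split; first exact: (irr_component_dim_ge d_gt1 G_comp).
by move=> p; apply: (irr_component_meets_generic d_gt1 G_comp).
Qed.
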